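(* For any myopic equilibrium $\mathbf{s}$ of a $k$-round Funding Game with bundle sizes $m^1,\dots,m^k$ and valuation profile $\mathbf{v}$ (with $\Delta^t>0$ for $t=1,\dots,k$), $$sw(OPT^{\mathbf{v}}) \;\le\; sw(\mathbf{s}) + \Delta^{k+1}\cdot\sum_{t=1}^k\left(m^t - \frac{sw(\mathbf{s}^t)}{\Delta^t}\right).$$
   Context: Players $1,\dots,n$ have valuation functions $v_i:\{0,\dots,m\}\to\mathbb{R}_{\ge0}$ with $v_i(0)=0$, nondecreasing, with diminishing marginal returns $v_i(x)-v_i(x-1)\ge v_i(x+1)-v_i(x)$. A (single-round) Funding Game with $M$ items and such valuations $w_i$: each player submits a request $(x_i,\tilde v_i)$ with $x_i\in\{0,\dots,M\}$ and $0\le \tilde v_i\le w_i(x_i)$; the Highest Ratio Greedy mechanism considers requests in descending order of $\tilde v_i/x_i$ (ties in favor of lower index) and grants each in turn $\min(x_i,\text{items still available})$ items; payoff is $w_i$ of the number of items received; a Nash equilibrium is a request profile where no player can increase its payoff by changing its own valid request. A $k$-round Funding Game with bundle sizes $m^1,\dots,m^k$ (positive integers, $\sum_t m^t=m$) consists of rounds $t=1,\dots,k$; in round $t$ a single-round Funding Game $G^t$ is played with $m^t$ items and marginal valuations $v_i^t(x)=v_i(x+\alpha_i^{t-1})-v_i(\alpha_i^{t-1})$, where $X_i^t$ is the number of items player $i$ receives in round $t$ and $\alpha_i^t=\sum_{j\le t}X_i^j$, $\alpha_i^0=0$. $\mathbf{s}^t$ is the request profile in round $t$ and $\mathbf{s}=(\mathbf{s}^1,\dots,\mathbf{s}^k)$.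 $\mathbf{s}$ is a myopic equilibrium if each $\mathbf{s}^t$ is a Nash equilibrium of $G^t$. $sw(\mathbf{s}^t)=\sum_i v_i^t(X_i^t)$, $sw(\mathbf{s})=\sum_i v_i(\alpha_i^k)$, and $\Delta^t=\max_i v_i^t(1)$ for $t=1,\dots,k+1$ (with $v_i^{k+1}(x)=v_i(x+\alpha_i^k)-v_i(\alpha_i^k)$). $sw(OPT^{\mathbf{v}})$ is the maximum of $\sum_i v_i(X_i)$ over allocations with $\sum_i X_i\le m$. *)

From HB Require Import structures.
From mathcomp Require Import all_boot all_order all_algebra.
Set Implicit Arguments. Unset Strict Implicit. Unset Printing Implicit Defensive.
Import Order.TTheory GRing.Theory Num.Theory.
Local Open Scope ring_scope.

(* A request is a pair (x_i, tilde v_i). *)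
Definition ratio (R : realFieldType) (q : nat * R) : R := q.2 / q.1%:R.
(* (with x_i = 0 the ratio is 0 by MathComp's convention 0^-1 = 0; such a
   request receives 0 items wherever it is placed, so this is harmless) *)

(* a is processed no later than b: higher ratio first, ties to lower index *)
Definition hrg_le (R : realFieldType) n (s : 'I_n -> nat * R) (a b : 'I_n) : bool :=
  (ratio (s b) < ratio (s a)) || ((ratio (s a) == ratio (s b)) && (a <= b)%N).

Definition hrg_order (R : realFieldType) n (s : 'I_n -> nat * R) : seq 'I_n :=
  sort (hrg_le s) (enum 'I_n).

Fixpoint grant n (x : 'I_n -> nat) (ord : seq 'I_n) (rem : nat) : 'I_n -> nat :=
  match ord with
  | [::] => fun _ => 0%N
  | i :: ord' =>
      let g := minn (x i) rem in
      fun j => if j == i then g else grant x ord' (rem - g) j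
  end.

Definition hrg_alloc (R : realFieldType) n (M : nat) (s : 'I_n -> nat * R) : 'I_n -> nat :=
  grant (fun i => (s i).1) (hrg_order s) M.

Definition valid_request (R : realFieldType) (M : nat) (w : nat -> R) (q : nat * R) : bool :=
  ((q.1 <= M)%N && (0 <= q.2)) && (q.2 <= w q.1).

Definition upd (R : realFieldType) n (s : 'I_n -> nat * R) (i : 'I_n) (q : nat * R) :
  'I_n -> nat * R := fun j => if j == i then q else s j.

Definition nash_eq (R : realFieldType) n (M : nat) (w : 'I_n -> nat -> R)
    (s : 'I_n -> nat * R) : Prop :=
  (forall i, valid_request M (w i) (s i)) /\
  (forall i q, valid_request M (w i) q ->
     w i (hrg_alloc M (upd s i q) i) <= w i (hrg_alloc M s i)).

Definition valuation_profile (R : realFieldType) n (v : 'I_n -> nat -> R) : Prop :=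
  forall i, [/\ v i 0%N = 0,
                (forall x, v i x <= v i x.+1) &
                (forall x, v i x.+2 - v i x.+1 <= v i x.+1 - v i x)].

(* k-round game: rounds t = 1..k, bundle sizes mb t, request profiles S t *)
Definition X (R : realFieldType) n (mb : nat -> nat) (S : nat -> 'I_n -> nat * R)
    (t : nat) : 'I_n -> nat := hrg_alloc (mb t) (S t).

Definition alpha (R : realFieldType) n (mb : nat -> nat) (S : nat -> 'I_n -> nat * R)
    (t : nat) (i : 'I_n) : nat := (\sum_(1 <= u < t.+1) X mb S u i)%N.

Definition marg (R : realFieldType) n (v : 'I_n -> nat -> R) (mb : nat -> nat)
    (S : nat -> 'I_n -> nat * R) (t : nat) (i : 'I_n) (x : nat) : R :=
  v i (x + alpha mb S t.-1 i)%N - v i (alpha mb S t.-1 i).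

Definition myopic_eq (R : realFieldType) n (k : nat) (v : 'I_n -> nat -> R)
    (mb : nat -> nat) (S : nat -> 'I_n -> nat * R) : Prop :=
  forall t, (1 <= t <= k)%N -> nash_eq (mb t) (marg v mb S t) (S t).

Definition sw_round (R : realFieldType) n (v : 'I_n -> nat -> R) (mb : nat -> nat)
    (S : nat -> 'I_n -> nat * R) (t : nat) : R :=
  \sum_(i < n) marg v mb S t i (X mb S t i).

Definition sw_total (R : realFieldType) n (k : nat) (v : 'I_n -> nat -> R)
    (mb : nat -> nat) (S : nat -> 'I_n -> nat * R) : R :=
  \sum_(i < n) v i (alpha mb S k i).

Definition Delta (R : realFieldType) n (v : 'I_n -> nat -> R) (mb : nat -> nat)
    (S : nat -> 'I_n -> nat * R) (t : nat) : R :=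
  \big[Num.max/0]_(i < n) marg v mb S t i 1%N.

Definition swOPT (R : realFieldType) n (m : nat) (v : 'I_n -> nat -> R) : R :=
  \big[Num.max/0]_(A : {ffun 'I_n -> 'I_m.+1} | (\sum_(i < n) A i <= m)%N)
     \sum_(i < n) v i (A i).

From HB Require Import structures.
From mathcomp Require Import all_boot all_order all_algebra.
From mathcomp Require Import lra.
Import Order.TTheory GRing.Theory Num.Theory.
Local Open Scope ring_scope.

(* The bound is pure accounting with concave valuations.  Fix an allocation
   A of at most m items and a player i with cumulative holdings
   0 = a_0 <= a_1 <= ... <= a_k.  Let u = Delta^(k+1) and D_t = Delta^t; the
   marginals of v_i decrease, so u <= D_t, D_t bounds the first marginal of
   round t, and u bounds the marginal after round k.  Capping the holdings at
   A_i, the value v_i(A_i) splits into per-round pieces plus a tail; each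
   round piece is at most both the round gain g_t and D_t per item, hence at
   most (1 - u/D_t) g_t + u * (items), and the tail is at most u per item.
   Summing gives  v_i(A_i) <= sum_t g_t (1 - u/D_t) + u A_i  (player_bound).
   Summing over players, sum_i g_t = sw(s^t) and sum_t sw(s^t) = sw(s), so
   sum_i v_i(A_i) <= sw(s) + u (m - sum_t sw(s^t)/D_t); maximizing over A
   yields the theorem. *)

Section ConcaveValuation.
Variables (R : realFieldType) (f : nat -> R).
Hypothesis f_mono : forall x, f x <= f x.+1.
Hypothesis f_concave : forall x, f x.+2 - f x.+1 <= f x.+1 - f x.

Lemma valuation_le : {homo f : x y / (x <= y)%N >-> x <= y}.
Proof. by apply: homo_leq => // a b c; apply: le_trans. Qed.

Lemma marginal_antitone {x y : nat} : (x <= y)%N -> f y.+1 - f y <= f x.+1 - f x.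
Proof.
apply: (homo_leq (f := fun z => f z.+1 - f z) (r := fun a b => b <= a)) => //.
by move=> a b c ba cb; apply: le_trans cb ba.
Qed.

Lemma increment_le_marginal {x y : nat} :
  (x <= y)%N -> f y - f x <= (y - x)%:R * (f x.+1 - f x).
Proof.
move=> le_xy; rewrite -(subnKC le_xy) addKn; elim: (y - x)%N => [|d IHd].
  by rewrite addn0 subrr mul0r.
have marg_d := marginal_antitone (leq_addr d x).
rewrite addnS mulrSr mulrDl mul1r -(subrK (f (x + d)%N) (f (x + d).+1)).
by rewrite -addrA addrC lerD.
Qed.

(* One round seen by a player whose holdings grow from p to q, against a
   target bundle A: the part of f A gained in that round is a convex
   combination (weights 1 - u/D and u/D) of the round's actual gain and of
   D per item, where D bounds the first marginal of the round. *)
Lemma capped_increment (A p q : nat) (u D : R) :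
  (p <= q)%N -> 0 < D -> 0 <= u <= D -> f p.+1 - f p <= D ->
  f (minn A q) - f (minn A p)
    <= (f q - f p) * (1 - u / D) + u * (minn A q - minn A p)%:R.
Proof.
move=> le_pq D_gt0 /andP[u_ge0 le_uD] marg_p.
have weight_ge0 : 0 <= 1 - u / D by rewrite subr_ge0 ler_pdivrMr // mul1r.
have [le_Ap | lt_pA] := leqP A p.
  rewrite !(minn_idPl _) ?(leq_trans le_Ap) // subrr subnn mulr0 addr0.
  by rewrite mulr_ge0 // subr_ge0 valuation_le.
set c := minn A q.
have le_pc : (p <= c)%N by rewrite leq_min (ltnW lt_pA).
have gain_le_round : f c - f p <= f q - f p by rewrite lerD2r valuation_le ?geq_minr.
have gain_le_items : f c - f p <= (c - p)%:R * D.
  apply: le_trans (increment_le_marginal le_pc) _.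
  exact: ler_wpM2l.
set l := u / D.
have l_ge0 : 0 <= l by rewrite divr_ge0 // ltW.
have u_eq : u = l * D by rewrite divfK // gt_eqF.
rewrite u_eq mulrAC -mulrA.
have := ler_wpM2l weight_ge0 gain_le_round.
have := ler_wpM2l l_ge0 gain_le_items.
rewrite /l; lra.
Qed.

Lemma tail_increment (A q : nat) (u : R) :
  0 <= u -> f q.+1 - f q <= u ->
  f A - f (minn A q) <= u * (A - minn A q)%:R.
Proof.
move=> u_ge0 marg_q; have [le_Aq | lt_qA] := leqP A q.
  by rewrite subrr subnn mulr0.
apply: le_trans (increment_le_marginal (ltnW lt_qA)) _.
by rewrite [u * _]mulrC; apply: ler_wpM2l.
Qed.

Lemma player_bound (a : nat -> nat) (D : nat -> R) (u : R) (k A : nat) :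
  f 0 = 0 -> a 0 = 0%N -> {homo a : s t / (s <= t)%N} -> 0 <= u ->
  (forall t, (1 <= t <= k)%N ->
     [/\ 0 < D t, u <= D t & f (a t.-1).+1 - f (a t.-1) <= D t]) ->
  f (a k).+1 - f (a k) <= u ->
  f A <= \sum_(1 <= t < k.+1) (f (a t) - f (a t.-1)) * (1 - u / D t)
         + u * A%:R.
Proof.
move=> f0 a0 a_mono u_ge0 round_bounds marg_k.
pose c t := minn A (a t).
have c_mono : {homo c : s t / (s <= t)%N}.
  by move=> s t le_st; rewrite leq_min geq_minl (leq_trans (geq_minr _ _)) ?a_mono.
have c0 : c 0%N = 0%N by rewrite /c a0 minn0.
have value_split : f A = (f A - f (c k)) + \sum_(0 <= t < k) (f (c t.+1) - f (c t)).
  by rewrite telescope_sumr // c0 f0 subr0 subrK.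
have items_split : A%:R = (A - c k)%:R + \sum_(0 <= t < k) (c t.+1 - c t)%:R :> R.
  by rewrite -natr_sum telescope_sumn // c0 subn0 -natrD subnK ?geq_minl.
rewrite big_add1 /= value_split items_split mulrDr addrCA mulr_sumr -big_split /=.
apply: lerD; first exact: tail_increment.
apply: ler_sum_nat => t /andP[_ lt_tk].
have [D_gt0 le_uD marg_t] := round_bounds t.+1 lt_tk.
by apply: capped_increment; rewrite ?u_ge0 ?a_mono.
Qed.

End ConcaveValuation.

Section FundingGame.
Variables (R : realFieldType) (n : nat) (v : 'I_n -> nat -> R).
Variables (mb : nat -> nat) (S : nat -> 'I_n -> nat * R).
Hypothesis v_profile : valuation_profile v.

Lemma alpha0 i : alpha mb S 0 i = 0%N.
Proof. by rewrite /alpha big_geq. Qed.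

Lemma alphaS t i : alpha mb S t.+1 i = (alpha mb S t i + X mb S t.+1 i)%N.
Proof. by rewrite /alpha big_nat_recr. Qed.

Lemma alpha_le i : {homo (fun t => alpha mb S t i) : s t / (s <= t)%N}.
Proof.
apply: homo_leq => [//|r s t|t]; first exact: leq_trans.
by rewrite alphaS leq_addr.
Qed.

Lemma sw_round_gains t : (1 <= t)%N ->
  sw_round v mb S t = \sum_(i < n) (v i (alpha mb S t i) - v i (alpha mb S t.-1 i)).
Proof.
case: t => // t _; apply: eq_bigr => i _.
by rewrite /marg alphaS addnC.
Qed.

Lemma sw_total_rounds k :
  sw_total k v mb S = \sum_(1 <= t < k.+1) sw_round v mb S t.
Proof.
have -> : \sum_(1 <= t < k.+1) sw_round v mb S t =
    \sum_(1 <= t < k.+1) \sum_(i < n) (v i (alpha mb S t i) - v i (alpha mb S t.-1 i)).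
  by apply: eq_big_nat => t /andP[t_ge1 _]; exact: sw_round_gains.
rewrite exchange_big; apply: eq_bigr => i _.
rewrite big_add1 /= telescope_sumr // alpha0.
by have [-> _ _] := v_profile i; rewrite subr0.
Qed.

Lemma Delta_ge0 t : 0 <= Delta v mb S t.
Proof.
rewrite /Delta; elim/big_ind: _ => // [x y x_ge0 y_ge0 | i _].
  by rewrite le_max x_ge0.
by have [_ v_mono _] := v_profile i; rewrite /marg subr_ge0 add1n.
Qed.

Lemma marg1_le_Delta t i : marg v mb S t i 1 <= Delta v mb S t.
Proof. exact: le_bigmax. Qed.

(* First marginals only decrease from round to round, hence so does Delta. *)
Lemma Delta_antitone s t : (s <= t)%N -> Delta v mb S t <= Delta v mb S s.
Proof.
move=> le_st; apply: bigmax_le => [|i _]; first exact: Delta_ge0.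
apply: le_trans (marg1_le_Delta s i); rewrite /marg !add1n.
have [_ v_mono v_concave] := v_profile i.
apply: marginal_antitone => //.
by apply: alpha_le; rewrite -!subn1 leq_sub2r.
Qed.

(* The welfare of any allocation of at most m = mb 1 + ... + mb k items is
   bounded by the right-hand side of the theorem: sum the per-player bound,
   with D t = Delta t and u = Delta (k+1), over all players. *)
Lemma welfare_bound k :
  (forall t, (1 <= t <= k)%N -> 0 < Delta v mb S t) -> forall A : 'I_n -> nat,
  (\sum_(i < n) A i <= \sum_(1 <= t < k.+1) mb t)%N ->
  \sum_(i < n) v i (A i) <=
    sw_total k v mb S
    + Delta v mb S k.+1 *
        \sum_(1 <= t < k.+1) ((mb t)%:R - sw_round v mb S t / Delta v mb S t).
Proof.
move=> Delta_gt0 A A_le_m; set u := Delta v mb S k.+1.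
have player i : v i (A i) <=
    \sum_(1 <= t < k.+1) (v i (alpha mb S t i) - v i (alpha mb S t.-1 i))
                          * (1 - u / Delta v mb S t) + u * (A i)%:R.
  have [v0 v_mono v_concave] := v_profile i.
  apply: player_bound => //; [exact: alpha0 | exact: alpha_le | exact: Delta_ge0 | |].
  - move=> t t_range; have /andP[_ t_le_k] := t_range.
    split; [exact: Delta_gt0 | exact: Delta_antitone (leqW t_le_k) |].
    by have := marg1_le_Delta t i; rewrite /marg add1n.
  - by have := marg1_le_Delta k.+1 i; rewrite /marg add1n.
apply: le_trans (ler_sum _ (fun i _ => player i)) _.
rewrite big_split /= exchange_big /= -mulr_sumr -natr_sum.
have -> : \sum_(1 <= t < k.+1) \sum_(i < n)
      (v i (alpha mb S t i) - v i (alpha mb S t.-1 i)) * (1 - u / Delta v mb S t) =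
    \sum_(1 <= t < k.+1) sw_round v mb S t * (1 - u / Delta v mb S t).
  by apply: eq_big_nat => t /andP[t_ge1 _]; rewrite sw_round_gains // mulr_suml.
rewrite sw_total_rounds sumrB -natr_sum mulrBr mulr_sumr.
have -> : \sum_(1 <= t < k.+1) sw_round v mb S t * (1 - u / Delta v mb S t) =
    \sum_(1 <= t < k.+1) sw_round v mb S t
    - \sum_(1 <= t < k.+1) u * (sw_round v mb S t / Delta v mb S t).
  by rewrite -sumrB; apply: eq_bigr => t _; rewrite mulrBr mulr1 mulrCA.
have : u * (\sum_(i < n) A i)%:R <= u * (\sum_(1 <= t < k.+1) mb t)%:R.
  by apply: ler_wpM2l; rewrite ?Delta_ge0 ?ler_nat.
lra.
Qed.

End FundingGame.

Theorem lemma2 (R : realFieldType) (n k m : nat) (v : 'I_n -> nat -> R)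
    (mb : nat -> nat) (S : nat -> 'I_n -> nat * R) :
  valuation_profile v ->
  (forall t, (1 <= t <= k)%N -> (0 < mb t)%N) ->
  (\sum_(1 <= t < k.+1) mb t)%N = m ->
  myopic_eq k v mb S ->
  (forall t, (1 <= t <= k)%N -> 0 < Delta v mb S t) ->
  swOPT m v <=
    sw_total k v mb S
    + Delta v mb S k.+1 *
        \sum_(1 <= t < k.+1) ((mb t)%:R - sw_round v mb S t / Delta v mb S t).
Proof.
move=> v_profile _ <- _ Delta_gt0.
have welfare := @welfare_bound R n v mb S v_profile k Delta_gt0.
apply: bigmax_le => [|A A_le_m]; last exact: welfare.
(* the bound is nonnegative: it dominates the welfare 0 of the empty allocation *)
apply: le_trans (welfare (fun=> 0%N) _); last by rewrite big1_eq.
by rewrite big1 // => i _; have [-> _ _] := v_profile i.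
Qed.
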